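(* Assume that a collection of nonnegative real numbers $\{\mu_n(a,k) : n\ge 0,\ a\in\{0,1\},\ k\in\mathbb{Z}\}$ satisfies, for all $n\ge 0$: (P1) for $a\in\{0,1\}$, $k\mapsto\mu_n(a,k)$ is $2^n$-periodic, i.e. $\mu_n(a,k)=\mu_n(a,k')$ whenever $k\equiv k'\pmod{2^n}$; (P2) letting $q_n$ denote an integer inverse of $3$ modulo $2^{n+1}$, for all $k\in\mathbb{Z}$ and $a\in\{0,1\}$, \[ \tfrac32\,\mu_n(a,k)=\mu_{n+1}(a,2q_nk)+\mu_{n+1}(\bar a,2q_nk-q_n)+\mu_{n+1}(a,2q_nk-2q_n), \] where $\bar a=1-a$; (P3) for all $k\in\mathbb{Z}$, $\mu_n(0,k)+\mu_n(1,k)=2^{-n}$. Then $\mu_n(a,k)=2^{-n-1}$ for all $n\ge 0$, $a\in\{0,1\}$ and $k\in\mathbb{Z}$. *)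

From Stdlib Require Import Reals ZArith.
Open Scope R_scope.

(* a \in {0,1} is encoded as bool: false = 0, true = 1; bar a = negb a. *)
Definition P1 (mu : nat -> bool -> Z -> R) : Prop :=
  forall n a k k', Z.modulo k (2 ^ Z.of_nat n) = Z.modulo k' (2 ^ Z.of_nat n) ->
    mu n a k = mu n a k'.

Definition inv3_mod (n : nat) (q : Z) : Prop :=
  Z.modulo (3 * q) (2 ^ Z.of_nat (S n)) = 1%Z.

Definition P2 (mu : nat -> bool -> Z -> R) : Prop :=
  forall n q, inv3_mod n q -> forall k a,
    3 / 2 * mu n a k =
      mu (S n) a (2 * q * k)%Z + mu (S n) (negb a) (2 * q * k - q)%Z
      + mu (S n) a (2 * q * k - 2 * q)%Z.

Definition P3 (mu : nat -> bool -> Z -> R) : Prop :=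
  forall n k, mu n false k + mu n true k = / 2 ^ n.

From Stdlib Require Import Reals ZArith Znumtheory Zpow_facts Lra Lia List Permutation.
Open Scope R_scope.

(* The bias b_n(k) = 2^(n+1) mu_n(0,k) - 1 is a 2^n-periodic function with values in
   [-1, 1].  By (P2) and (P3), b_n(k) = (w(2k) - w(2k-1) + w(2k-2)) / 3 where
   w(m) = b_(n+1)(q_n m).  Consider the quadratic form
     E_n = sum_(k mod 2^n) (b_n(k)^2 - b_n(k) b_n(k+1) / 5).
   Then 4/5 b_n(k)^2 <= E_n <= 6/5 2^n.  Substituting m -> q_n m turns the shift
   by 1 at level n+1 into a shift by 3, and a sum-of-squares certificate, exact up
   to a telescoping term, gives E_n <= 9/20 E_(n+1).  Hence
   E_n <= 6/5 2^n (9/10)^m for every m, so b_n = 0. *)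

Definition lsum {A : Type} (f : A -> R) (l : list A) : R :=
  fold_right (fun x s => f x + s) 0 l.

Section ListSums.
Context {A : Type}.
Implicit Types (f g : A -> R) (l : list A).

Lemma lsum_app f l1 l2 : lsum f (l1 ++ l2) = lsum f l1 + lsum f l2.
Proof. induction l1 as [|x l1 IH]; simpl; [lra | rewrite IH; lra]. Qed.

Lemma lsum_perm f l l' : Permutation l l' -> lsum f l = lsum f l'.
Proof. induction 1; simpl; lra. Qed.

Lemma lsum_map {B : Type} f (h : B -> A) (l : list B) :
  lsum f (map h l) = lsum (fun x => f (h x)) l.
Proof. induction l as [|x l IH]; simpl; [lra | rewrite IH; lra]. Qed.

Lemma lsum_plus f g l : lsum (fun x => f x + g x) l = lsum f l + lsum g l.
Proof. induction l as [|x l IH]; simpl; [lra | rewrite IH; lra]. Qed.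

Lemma lsum_scal c f l : lsum (fun x => c * f x) l = c * lsum f l.
Proof. induction l as [|x l IH]; simpl; [lra | rewrite IH; lra]. Qed.

Lemma lsum_ext f g l : (forall x, f x = g x) -> lsum f l = lsum g l.
Proof. intros E; induction l as [|x l IH]; simpl; [lra | rewrite IH, E; lra]. Qed.

Lemma lsum_le f g l : (forall x, f x <= g x) -> lsum f l <= lsum g l.
Proof. intros H; induction l as [|x l IH]; simpl; [lra | specialize (H x); lra]. Qed.

Lemma lsum_const c l : lsum (fun _ => c) l = INR (length l) * c.
Proof.
  induction l as [|x l IH]; [simpl; lra|].
  cbn [length lsum fold_right] in *. rewrite S_INR. unfold lsum in IH. rewrite IH. lra.
Qed.

Lemma lsum_nonneg f l : (forall x, 0 <= f x) -> 0 <= lsum f l.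
Proof. intros H; induction l as [|x l IH]; simpl; [lra | specialize (H x); lra]. Qed.

Lemma le_lsum f l x : (forall y, 0 <= f y) -> In x l -> f x <= lsum f l.
Proof.
  intros H; induction l as [|y l IH]; simpl; [tauto|].
  intros [<- | Hx].
  - pose proof (lsum_nonneg f l H). unfold lsum in *. lra.
  - specialize (IH Hx); specialize (H y). unfold lsum in *. lra.
Qed.

End ListSums.

Definition zrange (N : nat) : list Z := map Z.of_nat (seq 0 N).

Definition zsum (N : nat) (f : Z -> R) : R := lsum f (zrange N).

Definition periodic (N : Z) (f : Z -> R) : Prop :=
  forall x y, (N | x - y)%Z -> f x = f y.

Lemma zrange_S N : zrange (S N) = zrange N ++ Z.of_nat N :: nil.
Proof. unfold zrange; rewrite seq_S, map_app; reflexivity. Qed.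

Lemma in_zrange N x : In x (zrange N) <-> (0 <= x < Z.of_nat N)%Z.
Proof.
  unfold zrange; rewrite in_map_iff; split.
  - intros [y [<- Hy]]; apply in_seq in Hy; lia.
  - intros H; exists (Z.to_nat x); rewrite in_seq; lia.
Qed.

Lemma length_zrange N : length (zrange N) = N.
Proof. unfold zrange; rewrite length_map, length_seq; reflexivity. Qed.

Lemma NoDup_zrange N : NoDup (zrange N).
Proof. apply FinFun.Injective_map_NoDup; [intros x y; lia | apply seq_NoDup]. Qed.

Lemma periodic_mod N f x : periodic N f -> f (x mod N)%Z = f x.
Proof.
  intros Hf; apply Hf. destruct (Z.eq_dec N 0) as [-> | HN].
  - rewrite Zmod_0_r, Z.sub_diag; apply Z.divide_0_r.
  - apply Z.cong_iff_ex, Z.mod_mod, HN.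
Qed.

Lemma zsum_ext N f g : (forall k, f k = g k) -> zsum N f = zsum N g.
Proof. apply lsum_ext. Qed.

Lemma zsum_plus N f g : zsum N (fun k => f k + g k) = zsum N f + zsum N g.
Proof. apply lsum_plus. Qed.

Lemma zsum_scal N c f : zsum N (fun k => c * f k) = c * zsum N f.
Proof. apply lsum_scal. Qed.

Lemma zsum_le N f g : (forall k, f k <= g k) -> zsum N f <= zsum N g.
Proof. apply lsum_le. Qed.

Lemma zsum_const N c : zsum N (fun _ => c) = INR N * c.
Proof. unfold zsum; rewrite lsum_const, length_zrange; reflexivity. Qed.

Lemma zsum_double N f :
  zsum (2 * N) f = zsum N (fun k => f (2 * k)%Z + f (2 * k + 1)%Z).
Proof.
  induction N as [|N IH]; [reflexivity|].
  replace (2 * S N)%nat with (S (S (2 * N))) by lia.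
  unfold zsum in *; rewrite !zrange_S, !lsum_app, IH; cbn [lsum fold_right].
  replace (Z.of_nat (S (2 * N))) with (2 * Z.of_nat N + 1)%Z by lia.
  replace (Z.of_nat (2 * N)) with (2 * Z.of_nat N)%Z by lia.
  lra.
Qed.

Lemma le_zsum N f k :
  (0 < N)%nat -> periodic (Z.of_nat N) f -> (forall x, 0 <= f x) -> f k <= zsum N f.
Proof.
  intros HN Hf Hpos. rewrite <- (periodic_mod _ _ k Hf).
  apply le_lsum; [exact Hpos|]. apply in_zrange, Z.mod_pos_bound; lia.
Qed.

Lemma zsum_affine N f a b c :
  periodic (Z.of_nat N) f -> (Z.of_nat N | a * b - 1)%Z ->
  zsum N (fun i => f (a * i + c)%Z) = zsum N f.
Proof.
  intros Hf Hab. destruct N as [|N']; [reflexivity|]. set (N := S N') in *.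
  set (h := fun i => ((a * i + c) mod Z.of_nat N)%Z).
  assert (Hinj : forall x y, In x (zrange N) -> In y (zrange N) -> h x = h y -> x = y).
  { intros x y Hx Hy Hxy. apply in_zrange in Hx, Hy. unfold h in Hxy.
    apply Z.cong_iff_ex in Hxy.
    assert (Hd : (Z.of_nat N | x - y)%Z).
    { replace (x - y)%Z with (b * (a * x + c - (a * y + c)) - (a * b - 1) * (x - y))%Z
        by ring.
      apply Z.divide_sub_r; [apply Z.divide_mul_r, Hxy | apply Z.divide_mul_l, Hab]. }
    destruct Hd as [t Ht]. assert (t = 0)%Z by nia. subst; lia. }
  assert (Hperm : Permutation (map h (zrange N)) (zrange N)).
  { apply Permutation_map_same_l.
    - apply FinFun.Injective_map_NoDup_in; [exact Hinj | apply NoDup_zrange].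
    - intros x Hx. apply in_map_iff in Hx as [i [<- _]].
      apply in_zrange, Z.mod_pos_bound; lia. }
  unfold zsum. rewrite <- (lsum_perm f _ _ Hperm), lsum_map.
  apply lsum_ext; intro i. unfold h. symmetry; apply periodic_mod, Hf.
Qed.

Lemma zsum_shift N f c :
  periodic (Z.of_nat N) f -> zsum N (fun k => f (k + c)%Z) = zsum N f.
Proof.
  intros Hf.
  rewrite <- (zsum_affine N f 1 1 c Hf) by (rewrite Z.sub_diag; apply Z.divide_0_r).
  apply zsum_ext; intro k. rewrite Z.mul_1_l; reflexivity.
Qed.

Lemma zsum_telescope N h :
  periodic (Z.of_nat N) h -> zsum N (fun k => h k - h (k + 1)%Z) = 0.
Proof.
  intros Hh.
  transitivity (zsum N (fun k => h k + -1 * h (k + 1)%Z)).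
  { apply zsum_ext; intro; lra. }
  rewrite zsum_plus, zsum_scal, zsum_shift by exact Hh. lra.
Qed.

Definition energy (N : nat) (s : Z) (v : Z -> R) : R :=
  zsum N (fun k => v k * v k - v k * v (k + s)%Z / 5).

Lemma energy_le N s v : (forall k, -1 <= v k <= 1) -> energy N s v <= 6 / 5 * INR N.
Proof.
  intros Hv. unfold energy.
  rewrite Rmult_comm, <- zsum_const. apply zsum_le; intro k.
  pose proof (Hv k); pose proof (Hv (k + s)%Z). nra.
Qed.

Lemma sq_le_energy N s v k :
  (0 < N)%nat -> periodic (Z.of_nat N) v -> 4 / 5 * (v k * v k) <= energy N s v.
Proof.
  intros HN Hv. set (sq := fun x => v x * v x).
  assert (Hsq : periodic (Z.of_nat N) sq).
  { intros x y Hxy; unfold sq; rewrite (Hv x y Hxy); reflexivity. }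
  assert (Hlow : zsum N (fun x => 9 / 10 * sq x + - (1 / 10) * sq (x + s)%Z)
                 <= energy N s v).
  { apply zsum_le; intro x; unfold sq.
    pose proof (Rle_0_sqr (v x - v (x + s)%Z)). unfold Rsqr in *. nra. }
  rewrite zsum_plus, !zsum_scal, zsum_shift in Hlow by exact Hsq.
  pose proof (le_zsum N sq k HN Hsq (fun x => Rle_0_sqr (v x))).
  unfold sq in *. lra.
Qed.

Lemma energy_dilate N s q v :
  periodic (Z.of_nat N) v -> (Z.of_nat N | q * s - 1)%Z ->
  energy N s (fun m => v (q * m)%Z) = energy N 1 v.
Proof.
  intros Hv Hqs. unfold energy.
  rewrite <- (zsum_affine N (fun k => v k * v k - v k * v (k + 1)%Z / 5) q s 0).
  - apply zsum_ext; intro m. rewrite Z.add_0_r.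
    rewrite (Hv (q * (m + s)) (q * m + 1))%Z; [reflexivity|].
    replace (q * (m + s) - (q * m + 1))%Z with (q * s - 1)%Z by ring. exact Hqs.
  - intros x y Hxy. rewrite (Hv x y Hxy), (Hv (x + 1) (y + 1))%Z; [reflexivity|].
    replace (x + 1 - (y + 1))%Z with (x - y)%Z by ring. exact Hxy.
  - exact Hqs.
Qed.

(* Adding the telescoping term potential m2 m1 y0 y1 y2 - potential y0 y1 y2 y3 y4
   makes 9 (fine energy) - 20 (coarse energy) a sum of squares summand by summand;
   the squares in the proof of local_contraction are its LDL^T decomposition. *)
Definition potential (m2 m1 y0 y1 y2 : R) : R :=
  - 2 * m2 * y0 - 50 / 9 * m1 * m1 + 40 / 9 * m2 * m1 - 29 / 9 * m2 * m2
  + 9 / 5 * m1 * y2 + 9 / 5 * m2 * y1 + y0 * y0.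

Lemma local_contraction m2 m1 y0 y1 y2 y3 y4 :
  20 * (((y0 - m1 + m2) / 3) * ((y0 - m1 + m2) / 3)
        - ((y0 - m1 + m2) / 3) * ((y2 - y1 + y0) / 3) / 5)
  + potential m2 m1 y0 y1 y2
  <= 9 * ((y0 * y0 - y0 * y3 / 5) + (y1 * y1 - y1 * y4 / 5))
  + potential y0 y1 y2 y3 y4.
Proof.
  unfold potential.
  pose proof (Rle_0_sqr (m2 - y0 - 101/90 * y1 + 2/9 * y2)).
  pose proof (Rle_0_sqr (m1 + 3/5 * y0 + 1/15 * y1 - 101/300 * y2)).
  pose proof (Rle_0_sqr (y0 + 67/72 * y1 + 53/360 * y2)).
  pose proof (Rle_0_sqr (y1 + 6953/47871 * y2)).
  pose proof (Rle_0_sqr y2).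
  unfold Rsqr in *. lra.
Qed.

Definition coarse (w : Z -> R) (k : Z) : R :=
  (w (2 * k)%Z - w (2 * k - 1)%Z + w (2 * k - 2)%Z) / 3.

Definition potential_at (w : Z -> R) (k : Z) : R :=
  potential (w (2 * k - 2)%Z) (w (2 * k - 1)%Z) (w (2 * k)%Z) (w (2 * k + 1)%Z)
    (w (2 * k + 2)%Z).

Lemma coarse_contraction_at w k :
  20 * (coarse w k * coarse w k - coarse w k * coarse w (k + 1)%Z / 5)
  + (potential_at w k - potential_at w (k + 1)%Z)
  <= 9 * ((w (2 * k)%Z * w (2 * k)%Z - w (2 * k)%Z * w (2 * k + 3)%Z / 5)
          + (w (2 * k + 1)%Z * w (2 * k + 1)%Z - w (2 * k + 1)%Z * w (2 * k + 1 + 3)%Z / 5)).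
Proof.
  unfold coarse, potential_at.
  replace (2 * (k + 1) - 2)%Z with (2 * k)%Z by ring.
  replace (2 * (k + 1) - 1)%Z with (2 * k + 1)%Z by ring.
  replace (2 * (k + 1) + 1)%Z with (2 * k + 3)%Z by ring.
  replace (2 * (k + 1) + 2)%Z with (2 * k + 4)%Z by ring.
  replace (2 * (k + 1))%Z with (2 * k + 2)%Z by ring.
  replace (2 * k + 1 + 3)%Z with (2 * k + 4)%Z by ring.
  pose proof (local_contraction (w (2 * k - 2)%Z) (w (2 * k - 1)%Z) (w (2 * k)%Z)
                (w (2 * k + 1)%Z) (w (2 * k + 2)%Z) (w (2 * k + 3)%Z) (w (2 * k + 4)%Z)).
  lra.
Qed.

Lemma energy_contraction N w :
  periodic (2 * Z.of_nat N) w -> 20 * energy N 1 (coarse w) <= 9 * energy (2 * N) 3 w.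
Proof.
  intros Hw.
  assert (Hpot : periodic (Z.of_nat N) (potential_at w)).
  { intros x y Hxy. unfold potential_at.
    f_equal; apply Hw;
      match goal with |- (_ | ?a - ?b)%Z => replace (a - b)%Z with (2 * (x - y))%Z by ring end;
      apply Z.mul_divide_mono_l, Hxy. }
  pose proof (zsum_le N _ _ (coarse_contraction_at w)) as Hsum.
  rewrite zsum_plus, !zsum_scal, zsum_telescope in Hsum by exact Hpot.
  unfold energy. rewrite zsum_double. lra.
Qed.

Lemma le_0_of_le_geometric x C r :
  0 <= r < 1 -> (forall m, x <= C * r ^ m) -> x <= 0.
Proof.
  intros Hr Hx. apply Rnot_lt_le; intros Hpos.
  assert (HC : 0 < C) by (specialize (Hx 0%nat); simpl in Hx; lra).
  destruct (pow_lt_1_zero r ltac:(rewrite Rabs_pos_eq; lra) (x / C)) as [m Hm].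
  { apply Rdiv_lt_0_compat; lra. }
  specialize (Hm m (le_n m)). rewrite Rabs_pos_eq in Hm by (apply pow_le; lra).
  specialize (Hx m). apply (Rmult_lt_compat_l C) in Hm; [| exact HC].
  replace (C * (x / C)) with x in Hm by (field; lra). lra.
Qed.

Lemma inv3_mod_exists n : exists q, inv3_mod n q.
Proof.
  set (M := (2 ^ Z.of_nat (S n))%Z).
  assert (HM : (2 <= M)%Z).
  { unfold M. rewrite Nat2Z.inj_succ, Z.pow_succ_r by lia.
    pose proof (Z.pow_pos_nonneg 2 (Z.of_nat n)). lia. }
  assert (Hcop : rel_prime 3 M).
  { apply rel_prime_Zpower_r; [lia|]. apply Zgcd_1_rel_prime; reflexivity. }
  destruct (rel_prime_bezout _ _ Hcop) as [q t Hqt].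
  exists q. unfold inv3_mod. fold M.
  replace (3 * q)%Z with (1 + (- t) * M)%Z by lia.
  rewrite Z_mod_plus_full. apply Z.mod_1_l. lia.
Qed.

Section Bias.
Variable mu : nat -> bool -> Z -> R.
Hypothesis mu_ge0 : forall n a k, 0 <= mu n a k.
Hypothesis mu_P1 : P1 mu.
Hypothesis mu_P2 : P2 mu.
Hypothesis mu_P3 : P3 mu.

Definition bias (n : nat) (k : Z) : R := 2 ^ S n * mu n false k - 1.

Lemma bias_periodic n : periodic (Z.of_nat (2 ^ n)) (bias n).
Proof.
  intros x y Hxy. unfold bias. rewrite (mu_P1 n false x y); [reflexivity|].
  apply Z.cong_iff_ex. rewrite Nat2Z.inj_pow in Hxy. exact Hxy.
Qed.

Lemma bias_bounded n k : -1 <= bias n k <= 1.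
Proof.
  unfold bias.
  pose proof (mu_P3 n k) as F. pose proof (mu_ge0 n false k). pose proof (mu_ge0 n true k).
  assert (Hp : 0 < 2 ^ n) by (apply pow_lt; lra).
  assert (E : 2 ^ n * mu n false k + 2 ^ n * mu n true k = 1).
  { rewrite <- Rmult_plus_distr_l, F. field. lra. }
  simpl pow. nra.
Qed.

Lemma bias_recurrence n q k :
  inv3_mod n q ->
  bias n k = coarse (fun m => bias (S n) (q * m)%Z) k.
Proof.
  intros Hq. unfold coarse, bias.
  pose proof (mu_P2 n q Hq k false) as E. simpl negb in E.
  pose proof (mu_P3 (S n) (2 * q * k - q)%Z) as F.
  replace (q * (2 * k))%Z with (2 * q * k)%Z by ring.
  replace (q * (2 * k - 1))%Z with (2 * q * k - q)%Z by ring.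
  replace (q * (2 * k - 2))%Z with (2 * q * k - 2 * q)%Z by ring.
  assert (Hp : 0 < 2 ^ n) by (apply pow_lt; lra).
  simpl pow in *. set (t := 2 ^ n) in *.
  apply (f_equal (Rmult t)) in E, F.
  replace (t * / (2 * t)) with (1 / 2) in F by (field; lra).
  lra.
Qed.

Definition bias_energy (n : nat) : R := energy (2 ^ n) 1 (bias n).

Lemma bias_energy_le n : bias_energy n <= 6 / 5 * 2 ^ n.
Proof.
  replace (2 ^ n) with (INR (2 ^ n)) by (rewrite pow_INR; reflexivity).
  apply energy_le, bias_bounded.
Qed.

Lemma bias_energy_contraction n : bias_energy n <= 9 / 20 * bias_energy (S n).
Proof.
  destruct (inv3_mod_exists n) as [q Hq].
  set (w := fun m => bias (S n) (q * m)%Z).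
  assert (Hw : periodic (2 * Z.of_nat (2 ^ n)) w).
  { intros x y Hxy. apply bias_periodic.
    rewrite Nat.pow_succ_r', Nat2Z.inj_mul.
    replace (q * x - q * y)%Z with (q * (x - y))%Z by ring.
    apply Z.divide_mul_r, Hxy. }
  assert (Hfine : bias_energy (S n) = energy (2 * 2 ^ n) 3 w).
  { unfold bias_energy, w. rewrite <- Nat.pow_succ_r'. symmetry.
    apply energy_dilate; [apply bias_periodic|].
    rewrite Nat2Z.inj_pow. apply Zmod_divide_minus; [apply Z.pow_pos_nonneg; lia|].
    rewrite Z.mul_comm. exact Hq. }
  assert (Hcoarse : bias_energy n = energy (2 ^ n) 1 (coarse w)).
  { unfold bias_energy, energy. apply zsum_ext; intro k.
    rewrite <- !(bias_recurrence n q) by exact Hq. reflexivity. }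
  rewrite Hcoarse, Hfine. pose proof (energy_contraction (2 ^ n) w Hw). lra.
Qed.

Lemma bias_energy_le_pow n m : bias_energy n <= (9 / 20) ^ m * bias_energy (n + m).
Proof.
  induction m as [|m IH].
  - rewrite Nat.add_0_r. simpl. lra.
  - rewrite Nat.add_succ_r.
    pose proof (bias_energy_contraction (n + m)).
    assert (0 <= (9 / 20) ^ m) by (apply pow_le; lra).
    simpl pow. nra.
Qed.

Lemma bias_eq0 n k : bias n k = 0.
Proof.
  assert (Hsq : 4 / 5 * (bias n k * bias n k) <= 0).
  { apply (le_0_of_le_geometric _ (6 / 5 * 2 ^ n) (9 / 10)); [lra|]. intro m.
    assert (Hlow : 4 / 5 * (bias n k * bias n k) <= bias_energy n).
    { apply sq_le_energy; [apply Nat.neq_0_lt_0, Nat.pow_nonzero; lia | apply bias_periodic]. }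
    pose proof (bias_energy_le_pow n m) as Hpow.
    pose proof (bias_energy_le (n + m)) as Hup.
    assert (0 <= (9 / 20) ^ m) by (apply pow_le; lra).
    replace (6 / 5 * 2 ^ n * (9 / 10) ^ m) with ((9 / 20) ^ m * (6 / 5 * 2 ^ (n + m)))
      by (replace (9 / 10) with (9 / 20 * 2) by lra; rewrite Rpow_mult_distr, pow_add; ring).
    nra. }
  nra.
Qed.

Lemma mu_of_bias_eq0 n a k : bias n k = 0 -> mu n a k = / 2 ^ S n.
Proof.
  intros Hb. unfold bias in Hb. pose proof (mu_P3 n k) as F.
  assert (Hp : 0 < 2 ^ n) by (apply pow_lt; lra).
  simpl pow in *.
  assert (Hf : mu n false k = / (2 * 2 ^ n)).
  { apply (Rmult_eq_reg_l (2 * 2 ^ n)); [rewrite Rinv_r |]; lra. }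
  destruct a; [| exact Hf].
  rewrite Hf in F. apply (Rplus_eq_reg_l (/ (2 * 2 ^ n))). rewrite F. field. lra.
Qed.

End Bias.

Theorem proposition20 (mu : nat -> bool -> Z -> R) :
  (forall n a k, 0 <= mu n a k) ->
  P1 mu -> P2 mu -> P3 mu ->
  forall n a k, mu n a k = / 2 ^ (S n).
Proof.
  intros H0 H1 H2 H3 n a k.
  apply (mu_of_bias_eq0 mu H3).
  exact (bias_eq0 mu H0 H1 H2 H3 n k).
Qed.
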